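(* The language $\{\,b^{2^m}c^m\mid m\ge1\,\}$ belongs to $\mathscr{L}_{rt}(\mathrm{MC\text{-}OCA}(\log n))$, i.e., it is accepted by a real-time one-way cellular automaton in which, on every accepted input $w$, each pair of neighboring cells communicates $O(\log|w|)$ times.
   Context: A CA is $\langle S,F,A,B,\#,b_l,b_r,\delta\rangle$ with communication functions $b_l,b_r:S\to B\cup\{\bot\}$ ($\bot$: nothing sent) and local transition $\delta:(B\cup\{\#,\bot\})\times S\times(B\cup\{\#,\bot\})\to S$; cells $1..|w|$ start with input letters and update synchronously by $c_{t+1}(i)=\delta(b_r(c_t(i-1)),c_t(i),b_l(c_t(i+1)))$, outer cells receiving $\#$ once at the first step and $\bot$ afterwards. Acceptance: leftmost cell enters an accepting state; real time: within $|w|$ steps. OCA: $b_r\equiv\bot$, leftmost cell gets no boundary symbol. $\mathrm{com}(i,t)$: number of steps $j<t$ with $b_r(c_j(i))\ne\bot$ or $b_l(c_j(i+1))\ne\bot$; $\mathrm{mcom}(w)=\max_{1\le i\le|w|-1}\mathrm{com}(i,t(|w|))$. $\mathrm{MC\text{-}OCA}(f)$: OCAs accepting every accepted $w$ with $\mathrm{mcom}(w)\le g(|w|)$ for some $g\in O(f)$. *)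

From HB Require Import structures.
From mathcomp Require Import all_boot.

Set Implicit Arguments.
Unset Strict Implicit.
Unset Printing Implicit Defensive.

(* Symbols a cell can receive: a message b in B, the boundary symbol #,
   or bot (nothing sent). *)
Inductive msg (B : Type) : Type := MB of B | MHash | MBot.
Arguments MHash {B}.
Arguments MBot {B}.

(* A CA <S,F,A,B,#,b_l,b_r,delta> over input alphabet Sigma; the inclusion
   A ⊆ S is the injection inp. *)
Record CA (Sigma : finType) := MkCA {
  st : finType;
  com : finType;
  inp : Sigma -> st;
  inp_inj : injective inp;
  acc : pred st;
  bl : st -> option com;              (* b_l, None = bot *)
  br : st -> option com;              (* b_r, None = bot *)
  delta : msg com -> st -> msg com -> st
}.

Arguments st {Sigma} c.
Arguments com {Sigma} c.
Arguments inp {Sigma} c _.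
Arguments acc {Sigma} c _.
Arguments bl {Sigma} c _.
Arguments br {Sigma} c _.
Arguments delta {Sigma} c _ _ _.

Definition of_opt (B : Type) (o : option B) : msg B :=
  if o is Some b then MB b else MBot.

(* Cells are numbered 0 .. n-1 (paper: 1 .. n).  [oca = true] means the
   leftmost cell never receives a boundary symbol. *)
Definition step (Sigma : finType) (M : CA Sigma) (oca : bool) (n t : nat)
    (c : nat -> st M) : nat -> st M :=
  fun i =>
    delta M
      (if i == 0 then (if oca then MBot else if t == 0 then MHash else MBot)
       else of_opt (br M (c i.-1)))
      (c i)
      (if i == n.-1 then (if t == 0 then MHash else MBot)
       else of_opt (bl M (c i.+1))).

Fixpoint conf (Sigma : finType) (M : CA Sigma) (oca : bool) (a : Sigma)
    (w : seq Sigma) (t : nat) : nat -> st M :=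
  match t with
  | 0 => fun i => inp M (nth a (a :: w) i)
  | t'.+1 => @step Sigma M oca (size w).+1 t' (@conf Sigma M oca a w t')
  end.

(* Real-time acceptance: the leftmost cell is in an accepting state at some
   time t <= |w|.  The empty word (no cells) is never accepted. *)
Definition rt_accepts (Sigma : finType) (M : CA Sigma) (oca : bool)
    (w : seq Sigma) : Prop :=
  match w with
  | [::] => False
  | a :: w' => exists t, t <= size w /\ acc M (conf M oca a w' t 0)
  end.

Definition com_count (Sigma : finType) (M : CA Sigma) (oca : bool)
    (a : Sigma) (w : seq Sigma) (i t : nat) : nat :=
  count (fun j => isSome (br M (conf M oca a w j i))
                  || isSome (bl M (conf M oca a w j i.+1))) (iota 0 t).

(* mcom(w) for real time, t(|w|) = |w|: max over the |w|-1 neighbor pairs. *)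
Definition mcom (Sigma : finType) (M : CA Sigma) (oca : bool)
    (w : seq Sigma) : nat :=
  match w with
  | [::] => 0
  | a :: w' => \max_(0 <= i < size w') com_count M oca a w' i (size w)
  end.

Definition is_OCA (Sigma : finType) (M : CA Sigma) : Prop :=
  forall s, br M s = None.

Definition bigO (g f : nat -> nat) : Prop :=
  exists c N, forall n, N <= n -> g n <= c * f n.

Definition in_rt_MC_OCA (Sigma : finType) (f : nat -> nat)
    (L : seq Sigma -> Prop) : Prop :=
  exists M : CA Sigma,
    is_OCA M /\
    (forall w, L w <-> rt_accepts M true w) /\
    exists g, bigO g f /\
      forall w, rt_accepts M true w -> mcom M true w <= g (size w).

(* Alphabet {b, c} encoded as bool: b = true, c = false. *)
Definition Lbc (w : seq bool) : Prop :=
  exists m, 1 <= m /\ w = nseq (2 ^ m) true ++ nseq m false.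

Definition log2 (n : nat) : nat := trunc_log 2 n.

(* The leftmost cell of each suffix b^j c^k computes j in binary and
   streams it to its left neighbour during the time window [j, j+k]: a start
   message at time j, then the digits 0 .. k-2 (a message for a digit 1,
   silence for a 0), and at time j+k a closing message carrying digit k-1
   and the flag "2^k <= j".  A c-cell emits the number 0; a b-cell is a
   serial incrementer that adds 1 to the stream coming from its right,
   keeping one carry bit.  The leftmost cell therefore learns at time
   j+k = |w| whether j = 2^k, and each boundary carries at most
   k+1 <= m+1 <= log2 |w| + 1 messages. *)

From HB Require Import structures.
From mathcomp Require Import all_boot zify.
From Stdlib Require Import Classical.

Set Implicit Arguments.
Unset Strict Implicit.
Unset Printing Implicit Defensive.

(* [bit j s] is the s-th binary digit of j; [carry j s] says that the s
   lowest digits of j are all 1, i.e. that adding 1 to j carries into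
   position s. *)
Definition bit (j s : nat) : bool := odd (j %/ 2 ^ s).
Definition carry (j s : nat) : bool := j %% 2 ^ s == (2 ^ s).-1.

Lemma modn_expS_bit j s : j %% 2 ^ s.+1 = bit j s * 2 ^ s + j %% 2 ^ s.
Proof.
rewrite /bit {1}(divn_eq j (2 ^ s)) {1}(divn_eq (j %/ 2 ^ s) 2).
rewrite mulnDl -mulnA -expnS -addnA modnMDl modn_small modn2 //.
have := ltn_mod j (2 ^ s); rewrite expn_gt0 expnS /= => lt_r.
by case: (odd _); lia.
Qed.

Lemma carryS j s : carry j s.+1 = bit j s && carry j s.
Proof.
rewrite /carry modn_expS_bit expnS.
have := ltn_mod j (2 ^ s); rewrite expn_gt0 /= => lt_r.
by case: (bit j s); lia.
Qed.

Lemma bitS j s : bit j.+1 s = bit j s (+) carry j s.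
Proof.
rewrite /bit /carry.
have pos : 0 < 2 ^ s by rewrite expn_gt0.
have lt_r := ltn_mod j (2 ^ s).
rewrite {1}(divn_eq j (2 ^ s)) -addnS divnMDl // oddD; congr (_ (+) _).
case: (ltngtP (j %% 2 ^ s).+1 (2 ^ s)) => [lt|gt|eq].
- by rewrite divn_small //; apply/esym; lia.
- by lia.
- by rewrite eq divnn pos; apply/esym; lia.
Qed.

Lemma overflow_succ j k : (2 ^ k <= j.+1) = (2 ^ k <= j) || carry j k.
Proof.
rewrite /carry.
have pos : 0 < 2 ^ k by rewrite expn_gt0.
case: (leqP (2 ^ k) j) => [le|lt] /=; first by lia.
by rewrite modn_small //; lia.
Qed.

Lemma succ_eq_exp j k : (j.+1 == 2 ^ k) = carry j k && ~~ (2 ^ k <= j).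
Proof.
rewrite /carry.
have pos : 0 < 2 ^ k by rewrite expn_gt0.
case: (leqP (2 ^ k) j) => [le|lt] /=; first by rewrite andbF; lia.
by rewrite modn_small // andbT; lia.
Qed.

(* Messages sent to the left: [MStart] opens a transmission, [MOne] is a
   binary digit 1 (a digit 0 is transmitted by silence), and [MLast b ov]
   closes it with the most significant digit b and the flag ov telling
   whether the transmitted number is at least 2^k. *)
Inductive Msg := MStart | MOne | MLast of bool & bool.

Definition Msg_enc (m : Msg) : option (option (bool * bool)) :=
  match m with MStart => None | MOne => Some None | MLast b o => Some (Some (b, o)) end.
Definition Msg_dec (x : option (option (bool * bool))) : Msg :=
  match x with None => MStart | Some None => MOne | Some (Some (b, o)) => MLast b o end.
Lemma Msg_encK : cancel Msg_enc Msg_dec. Proof. by case. Qed.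
HB.instance Definition _ := Finite.copy Msg (can_type Msg_encK).

(* A c-cell starts in [CFresh], waits in [CWait] and emits
   the closing message in [CLast]; a b-cell idles in [BIdle], then in
   [BCount out cr] holds the next message [out] it will send and the carry
   [cr] of the increment, and ends in [BFinal out acc], where [acc] is the
   acceptance verdict.  [Dead] is absorbing. *)
Inductive St :=
  | CFresh | CWait | CLast | Dead | BIdle
  | BCount of option Msg & bool
  | BFinal of Msg & bool.

Definition St_enc (s : St) : ('I_5 + (option Msg * bool) + (Msg * bool))%type :=
  match s with
  | CFresh => inl (inl (@Ordinal 5 0 isT)) | CWait => inl (inl (@Ordinal 5 1 isT))
  | CLast => inl (inl (@Ordinal 5 2 isT)) | Dead => inl (inl (@Ordinal 5 3 isT))
  | BIdle => inl (inl (@Ordinal 5 4 isT))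
  | BCount o c => inl (inr (o, c)) | BFinal m a => inr (m, a) end.
Definition St_dec (x : ('I_5 + (option Msg * bool) + (Msg * bool))%type) : St :=
  match x with
  | inl (inl i) => match val i with 0 => CFresh | 1 => CWait | 2 => CLast | 3 => Dead | _ => BIdle end
  | inl (inr (o, c)) => BCount o c | inr (m, a) => BFinal m a end.
Lemma St_encK : cancel St_enc St_dec. Proof. by case. Qed.
HB.instance Definition _ := Finite.copy St (can_type St_encK).

(* A b-cell adds 1 to the number streamed in from the
   right, digit by digit, and streams the result on to the left. *)
Definition react (r : msg Msg) (s : St) : St :=
  match s with
  | CFresh => match r with MHash => CLast | MB MStart => CWait | _ => Dead end
  | CWait => match r with MB (MLast _ _) => CLast | MBot => CWait | _ => Dead end
  | CLast | Dead | BFinal _ _ => Dead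
  | BIdle => match r with MBot => BIdle | MB MStart => BCount (Some MStart) true | _ => Dead end
  | BCount _ c => match r with
      | MBot => BCount (if c then Some MOne else None) false
      | MB MOne => BCount (if c then None else Some MOne) c
      | MB (MLast b ov) => BFinal (MLast (b (+) c) (ov || (b && c))) ((b && c) && ~~ ov)
      | _ => Dead end
  end.

Definition init (x : bool) : St := if x then BIdle else CFresh.
Lemma init_inj : injective init. Proof. by case; case. Qed.

Definition emit (s : St) : option Msg :=
  match s with
  | CFresh => Some MStart | CLast => Some (MLast false false)
  | BCount o _ => o | BFinal m _ => Some m | _ => None end.

Definition accepting (s : St) : bool := if s is BFinal _ acc then acc else false.

Definition counter_oca : CA bool :=
  @MkCA bool St Msg init init_inj accepting emit (fun _ => None) (fun _ s r => react r s).

Lemma counter_oca_is_OCA : is_OCA counter_oca.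
Proof. by []. Qed.

(* The message emitted at time t by the leftmost cell of a suffix
   b^j c^k (k > 0): [MStart] at time j, then the digits 0 .. k-2 of j, and
   at time j+k the closing message with digit k-1 and the flag 2^k <= j. *)
Definition signal (j k t : nat) : option Msg :=
  if t == j then Some MStart
  else if (j < t) && (t < j + k) then (if bit j (t - j).-1 then Some MOne else None)
  else if t == j + k then Some (MLast (bit j k.-1) (2 ^ k <= j))
  else None.

Variant phase (j k : nat) : nat -> Set :=
  | Before t of t < j : phase j k t
  | AtStart : phase j k j
  | Middle s of s.+1 < k : phase j k (j + s.+1)
  | AtEnd : phase j k (j + k)
  | After t of j + k < t : phase j k t.

Lemma phaseP j k t : 0 < k -> phase j k t.
Proof.
move=> k_gt0.
case: (ltngtP t j) => [lt_tj|gt_tj|->]; [exact: Before | | exact: AtStart].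
case: (ltngtP t (j + k)) => [lt_tjk|gt_tjk|->]; [|exact: After|exact: AtEnd].
have -> : t = j + (t - j).-1.+1 by lia.
by apply: Middle; lia.
Qed.

Lemma signal_before j k t : t < j -> signal j k t = None.
Proof. by rewrite /signal => lt; do 3 (case: ifP; first lia). Qed.

Lemma signal_start j k : signal j k j = Some MStart.
Proof. by rewrite /signal eqxx. Qed.

Lemma signal_middle j k s : s.+1 < k ->
  signal j k (j + s.+1) = if bit j s then Some MOne else None.
Proof.
rewrite /signal => lt; case: ifP; first lia.
by case: ifP; [have -> : (j + s.+1 - j).-1 = s by lia | lia].
Qed.

Lemma signal_end j k : 0 < k ->
  signal j k (j + k) = Some (MLast (bit j k.-1) (2 ^ k <= j)).
Proof. by rewrite /signal => k_gt0; do 2 (case: ifP; first lia); rewrite eqxx. Qed.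

Lemma signal_after j k t : j + k < t -> signal j k t = None.
Proof. by rewrite /signal => lt; do 3 (case: ifP; first lia). Qed.

Lemma count_signal j k T : count (fun t => isSome (signal j k t)) (iota 0 T) <= k.+1.
Proof.
rewrite -size_filter -(size_iota j k.+1).
apply: uniq_leq_size; first exact/filter_uniq/iota_uniq.
move=> t; rewrite mem_filter !mem_iota /signal => /andP [+ _].
by do 3 (case: ifP => [? _|_]; first lia).
Qed.

(* Run of a c-cell whose suffix is c^(k+1): it emits [signal 0 (k+1)]. *)
Definition c_trace (k t : nat) : St :=
  if t == 0 then CFresh else if t <= k then CWait else if t == k.+1 then CLast else Dead.

(* Run of a b-cell whose suffix is b^(j+1) c^k: while receiving
   [signal j k] it emits [signal (j+1) k], and it accepts exactly when
   j+1 = 2^k. *)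
Definition b_trace (j k t : nat) : St :=
  if t <= j then BIdle
  else if t <= j + k then BCount (signal j.+1 k t) (carry j (t - j.+1))
  else if t == (j + k).+1 then BFinal (MLast (bit j.+1 k.-1) (2 ^ k <= j.+1)) (j.+1 == 2 ^ k)
  else Dead.

(* Run of the leftmost cell of any suffix b^j c^k with k > 0. *)
Definition cell_trace (j k : nat) : nat -> St :=
  if j is j'.+1 then b_trace j' k else c_trace k.-1.

Lemma b_trace_idle j k t : t <= j -> b_trace j k t = BIdle.
Proof. by rewrite /b_trace => ->. Qed.

Lemma b_trace_count j k t : j < t <= j + k ->
  b_trace j k t = BCount (signal j.+1 k t) (carry j (t - j.+1)).
Proof. by rewrite /b_trace => /andP [lt le]; rewrite le; case: ifP; first lia. Qed.

Lemma b_trace_final j k : b_trace j k (j + k).+1 =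
  BFinal (MLast (bit j.+1 k.-1) (2 ^ k <= j.+1)) (j.+1 == 2 ^ k).
Proof. by rewrite /b_trace eqxx; do 2 (case: ifP; first lia). Qed.

Lemma b_trace_dead j k t : (j + k).+1 < t -> b_trace j k t = Dead.
Proof. by rewrite /b_trace => lt; do 3 (case: ifP; first lia). Qed.

Lemma b_trace_step j k t : 0 < k ->
  react (of_opt (signal j k t)) (b_trace j k t) = b_trace j k t.+1.
Proof.
move=> k_gt0; case: t / (@phaseP j k t k_gt0) => [t lt | | s lt | | t lt].
- by rewrite signal_before // !b_trace_idle //; lia.
- rewrite signal_start b_trace_idle // b_trace_count; last by lia.
  by rewrite subnn signal_start /carry expn0 modn1.
- rewrite signal_middle // !b_trace_count; try lia.
  have -> : j + s.+1 - j.+1 = s by lia.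
  have -> : (j + s.+1).+1 - j.+1 = s.+1 by lia.
  have -> : (j + s.+1).+1 = j.+1 + s.+1 by lia.
  rewrite (@signal_middle j.+1 k s) // bitS carryS.
  by case: (bit j s); case: (carry j s).
- rewrite signal_end // b_trace_count; last by lia.
  rewrite b_trace_final; case: k k_gt0 => // k _ /=.
  have -> : j + k.+1 - j.+1 = k by lia.
  by rewrite overflow_succ succ_eq_exp carryS bitS; case: (bit j k); case: (carry j k).
- rewrite signal_after // (b_trace_dead (t := t.+1)); last by lia.
  case: (ltngtP t (j + k).+1) => [|lt'|->]; first lia.
  + by rewrite b_trace_dead.
  + by rewrite b_trace_final.
Qed.

Lemma c_trace_wait k t : 0 < t <= k -> c_trace k t = CWait.
Proof. by rewrite /c_trace => /andP [lt ->]; case: ifP; first lia. Qed.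

Lemma c_trace_last k : c_trace k k.+1 = CLast.
Proof. by rewrite /c_trace ltnn eqxx. Qed.

Lemma c_trace_dead k t : k.+1 < t -> c_trace k t = Dead.
Proof. by rewrite /c_trace => lt; do 3 (case: ifP; first lia). Qed.

Lemma c_trace_step k t : 0 < k ->
  react (of_opt (signal 0 k t)) (c_trace k t) = c_trace k t.+1.
Proof.
move=> k_gt0; case: t / (@phaseP 0 k t k_gt0) => [t lt | | s lt | | t lt] //.
- by rewrite signal_start (@c_trace_wait k 1) //; lia.
- by rewrite signal_middle // /bit div0n !c_trace_wait //; lia.
- by rewrite signal_end // c_trace_wait ?c_trace_last //; lia.
- rewrite signal_after // (c_trace_dead (t := t.+1)); last by lia.
  by case: (ltngtP t k.+1) => [|lt'|->]; [lia | rewrite c_trace_dead | rewrite c_trace_last].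
Qed.

Lemma c_trace_step_edge t :
  react (if t == 0 then MHash else MBot) (c_trace 0 t) = c_trace 0 t.+1.
Proof. by case: t => [|[|t]]. Qed.

Lemma cell_trace_emit j k t : 0 < k -> emit (cell_trace j k t) = signal j k t.
Proof.
move=> k_gt0; case: j => [|j] /=.
  case: t / (@phaseP 0 k t k_gt0) => [t lt | | s lt | | t lt] //.
  - by rewrite signal_middle // /bit div0n c_trace_wait //; lia.
  - case: k k_gt0 => // k _; rewrite signal_end // add0n c_trace_last.
    by rewrite /bit div0n leqNgt expn_gt0.
  - by rewrite signal_after // c_trace_dead //; lia.
case: t / (@phaseP j.+1 k t k_gt0) => [t lt | | s lt | | t lt].
- by rewrite b_trace_idle // signal_before.
- by rewrite b_trace_count //; lia.
- by rewrite b_trace_count //; lia.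
- by rewrite addSn b_trace_final signal_end.
- by rewrite b_trace_dead ?signal_after //; lia.
Qed.

Lemma cell_trace_accepting j k t : 0 < k ->
  accepting (cell_trace j k t) = (t == j + k) && (j == 2 ^ k).
Proof.
move=> k_gt0; case: j => [|j] /=.
  by rewrite [0 == _]eq_sym expn_eq0 andbF /c_trace; repeat case: ifP.
case: (ltngtP t (j + k).+1) => [lt|gt|->].
- by rewrite /b_trace; do 2 (case: ifP => //); lia.
- by rewrite b_trace_dead //; lia.
- by rewrite b_trace_final.
Qed.

(* A state is quiet if it is not about to close a transmission and has
   not accepted.  Cells whose suffix is not of the form b^j c^k, k > 0,
   remain quiet. *)
Definition quiet (s : St) : bool :=
  match s with CLast | BFinal _ _ | BCount (Some (MLast _ _)) _ => false | _ => true end.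

(* Received symbols that may end a quiet phase. *)
Definition closing (r : msg Msg) : bool :=
  match r with MHash | MB (MLast _ _) => true | _ => false end.

Lemma quiet_react s r : quiet s -> ~~ closing r -> quiet (react r s).
Proof.
by case: s => [| | | | |[[| |? ?]|] []|? ?]; case: r => [[| |? ?]| |] //=; case: ifP.
Qed.

Lemma quiet_emit s : quiet s -> ~~ closing (of_opt (emit s)).
Proof. by case: s => //= [[[]|]]. Qed.

Lemma quiet_rejecting s : quiet s -> accepting s = false.
Proof. by case: s. Qed.

Definition bc_word (u : seq bool) (j k : nat) : Prop :=
  0 < k /\ u = nseq j true ++ nseq k false.

Lemma bc_word_drop J m p : 0 < m -> p < J + m ->
  exists j k, bc_word (drop p (nseq J true ++ nseq m false)) j k /\ k <= m.
Proof.
move=> m_gt0 lt_p; rewrite drop_cat size_nseq; case: ifP => lt_pJ.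
  by exists (J - p), m; rewrite drop_nseq.
exists 0, (m - (p - J)); rewrite drop_nseq; split; last exact: leq_subr.
by split => //; lia.
Qed.

Lemma recurrence_eq (T : Type) (F : nat -> T -> T) (f g : nat -> T) :
  f 0 = g 0 -> (forall t, f t.+1 = F t (f t)) -> (forall t, g t.+1 = F t (g t)) ->
  forall t, f t = g t.
Proof. by move=> e0 ef eg; elim=> // t IH; rewrite ef eg IH. Qed.

Section Run.
Variables (a : bool) (w : seq bool).
Local Notation cf t := (conf counter_oca true a w t).

Lemma conf_init i : cf 0 i = init (nth a (a :: w) i).
Proof. by []. Qed.

Lemma conf_step_inner t i : i < size w -> cf t.+1 i = react (of_opt (emit (cf t i.+1))) (cf t i).
Proof. by move=> lt; rewrite /= /step (ltn_eqF lt). Qed.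

Lemma conf_step_edge t : cf t.+1 (size w) = react (if t == 0 then MHash else MBot) (cf t (size w)).
Proof. by rewrite /= /step eqxx. Qed.

Lemma drop_edge : drop (size w) (a :: w) = [:: nth a (a :: w) (size w)].
Proof. by rewrite (drop_nth a) ?drop_oversize //= ltnS. Qed.

Lemma suffix_trace i j k : i <= size w -> bc_word (drop i (a :: w)) j k ->
  forall t, cf t i = cell_trace j k t.
Proof.
move Ed: (size w - i) => d; elim: d i j k Ed => [|d IH] i j k Ed le_i [k_gt0 Eu].
  have Ei : i = size w by lia.
  rewrite Ei drop_edge in Eu *.
  have sz := congr1 size Eu; rewrite /= size_cat !size_nseq in sz.
  have [Ej Ek] : j = 0 /\ k = 1 by lia.
  subst j k; case: Eu => Ex.
  apply: (recurrence_eq (F := fun t => react (if t == 0 then MHash else MBot))).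
  - by rewrite conf_init Ex.
  - exact: conf_step_edge.
  - by move=> t; rewrite c_trace_step_edge.
have lt_i : i < size w by lia.
have Ed' : size w - i.+1 = d by lia.
move: Eu; rewrite (drop_nth a) /= ?ltnS 1?ltnW //.
have nonempty : 0 < size (drop i w) by rewrite size_drop; lia.
case: j => [|j] /=.
  case: k k_gt0 nonempty => [|k] // _ nonempty [Ex Eu].
  have k_gt0 : 0 < k by move: nonempty; rewrite Eu size_nseq.
  have next := IH _ 0 k Ed' lt_i (conj k_gt0 Eu).
  apply: (recurrence_eq (F := fun t => react (of_opt (signal 0 k t)))).
  - by rewrite conf_init Ex.
  - by move=> t; rewrite conf_step_inner // next cell_trace_emit.
  - by move=> t; rewrite c_trace_step.
case=> Ex Eu.
have next := IH _ j k Ed' lt_i (conj k_gt0 Eu).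
apply: (recurrence_eq (F := fun t => react (of_opt (signal j k t)))).
- by rewrite conf_init Ex.
- by move=> t; rewrite conf_step_inner // next cell_trace_emit.
- by move=> t; rewrite b_trace_step.
Qed.

Lemma nonbc_quiet i : i <= size w -> (forall j k, ~ bc_word (drop i (a :: w)) j k) ->
  forall t, quiet (cf t i).
Proof.
move Ed: (size w - i) => d; elim: d i Ed => [|d IH] i Ed le_i not_bc.
  have Ei : i = size w by lia.
  have Ex : nth a (a :: w) i = true.
    case Ex: (nth a (a :: w) i) => //; case: (not_bc 0 1).
    by rewrite Ei drop_edge -Ei Ex.
  have run : forall t, cf t i = if t == 0 then BIdle else Dead.
    apply: (recurrence_eq (F := fun t => react (if t == 0 then MHash else MBot)))
      => [|t|[|t]] //; first by rewrite conf_init Ex.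
    by rewrite Ei conf_step_edge.
  by move=> t; rewrite run; case: ifP.
have lt_i : i < size w by lia.
have Ed' : size w - i.+1 = d by lia.
have Eu : drop i (a :: w) = nth a (a :: w) i :: drop i.+1 (a :: w).
  by rewrite (drop_nth a) //= ltnS ltnW.
case: (classic (exists j k, bc_word (drop i.+1 (a :: w)) j k)) => [[j [k bc]]|not_bc'].
  have next := suffix_trace lt_i bc; case: bc => k_gt0 Eu'.
  case Ex: (nth a (a :: w) i).
    by case: (not_bc j.+1 k); split => //; rewrite Eu Ex Eu'.
  case: j Eu' next => [|j] Eu' next.
    by case: (not_bc 0 k.+1); split => //; rewrite Eu Ex Eu'.
  have run : forall t, cf t i = if t == 0 then CFresh else Dead.
    apply: (recurrence_eq (F := fun t => react (of_opt (signal j.+1 k t))))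
      => [|t|[|t]] //; first by rewrite conf_init Ex.
    by rewrite conf_step_inner // next cell_trace_emit.
  by move=> t; rewrite run; case: ifP.
have next : forall t, quiet (cf t i.+1).
  by move=> t; apply: IH => // j k bc; apply: not_bc'; exists j, k.
elim=> [|t IHt]; first by rewrite conf_init; case: (nth _ _ _).
by rewrite conf_step_inner //; apply: quiet_react; last exact: quiet_emit.
Qed.

Lemma leftmost_accepts j k t : bc_word (a :: w) j k ->
  acc counter_oca (cf t 0) = (t == j + k) && (j == 2 ^ k).
Proof.
move=> bc; have k_gt0 : 0 < k by case: bc.
have -> : acc counter_oca (cf t 0) = accepting (cell_trace j k t).
  by rewrite -(suffix_trace (leq0n _) (i := 0)).
exact: cell_trace_accepting.
Qed.

(* The traffic across the boundary between cells i and i+1 is what cell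
   i+1 emits; if its suffix is b^j c^k this happens at most k+1 times. *)
Lemma com_count_le i j k T : i < size w -> bc_word (drop i.+1 (a :: w)) j k ->
  com_count counter_oca true a w i T <= k.+1.
Proof.
move=> lt_i bc; rewrite /com_count.
rewrite (@eq_count _ _ (fun t => isSome (signal j k t))); first exact: count_signal.
by move=> t /=; rewrite (suffix_trace lt_i bc) cell_trace_emit //; case: bc.
Qed.

End Run.

Lemma accepts_of_Lbc w : Lbc w -> rt_accepts counter_oca true w.
Proof.
case=> m [m_gt0 Ew]; case: w Ew => [|a w] Ew.
  by move/(congr1 size): Ew; rewrite size_cat !size_nseq /=; lia.
exists (size (a :: w)); split => //.
by rewrite (@leftmost_accepts _ _ (2 ^ m) m) // Ew size_cat !size_nseq !eqxx.
Qed.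

Lemma Lbc_of_accepts w : rt_accepts counter_oca true w -> Lbc w.
Proof.
case: w => [//|a w] [t [_ acc_t]].
case: (classic (exists j k, bc_word (a :: w) j k)) => [[j [k bc]]|not_bc].
  move: acc_t; rewrite (leftmost_accepts _ bc) => /andP [_ /eqP Ej].
  by case: bc => k_gt0; rewrite Ej => Ew; exists k.
have : quiet (conf counter_oca true a w t 0).
  by apply: nonbc_quiet => // j k bc; apply: not_bc; exists j, k.
by move/quiet_rejecting; rewrite -[accepting _]/(acc counter_oca _) acc_t.
Qed.

(* On an accepted input b^(2^m) c^m every boundary carries at most m+1
   messages, and m <= log2 |w|. *)
Lemma mcom_counter_oca w : Lbc w -> mcom counter_oca true w <= (log2 (size w)).+1.
Proof.
case=> m [m_gt0 Ew]; case: w Ew => [|a w] Ew.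
  by move/(congr1 size): Ew; rewrite size_cat !size_nseq /=; lia.
have size_w : size (a :: w) = 2 ^ m + m by rewrite Ew size_cat !size_nseq.
have m_le_log : m <= log2 (size (a :: w)).
  by rewrite size_w /log2; apply: trunc_log_max => //; rewrite leq_addr.
rewrite /mcom; apply/bigmax_leqP_seq => i; rewrite mem_index_iota => /andP [_ lt_i] _.
have {}lt_i : i < size w := lt_i.
have [|j [k [bc le_k]]] := @bc_word_drop (2 ^ m) m i.+1 m_gt0.
  by move: size_w => /=; lia.
rewrite -Ew in bc; apply: leq_trans (com_count_le _ lt_i bc) _; lia.
Qed.

Lemma bigO_log2_succ : bigO (fun n => (log2 n).+1) log2.
Proof.
exists 2, 2 => n le_2n.
have : 0 < log2 n by rewrite /log2 trunc_log_gt0.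
lia.
Qed.

Theorem mainTheorem9 : in_rt_MC_OCA log2 Lbc.
Proof.
exists counter_oca; split; first exact: counter_oca_is_OCA.
have accepts_iff : forall w, Lbc w <-> rt_accepts counter_oca true w.
  by move=> w; split; [exact: accepts_of_Lbc | exact: Lbc_of_accepts].
split; first exact: accepts_iff.
exists (fun n => (log2 n).+1); split; first exact: bigO_log2_succ.
by move=> w /accepts_iff; exact: mcom_counter_oca.
Qed.
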